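(* Let $p \in (0,1]$, let $s = 1/p \geq 1$, and let $q = 1-p$. For integers $1 \le n \le s$ define $$x_n = \sum_{k=1}^n\binom{n}{k}(-1)^{k+1}\frac{1}{1-q^k}, \qquad y_n = \sum_{k=1}^n\binom{n}{k}(-1)^{k+1}\frac{1+q^k}{(1-q^k)^2}$$ (these are $\mathbb{E}(Y_n^s)$ and $\mathbb{E}((Y_n^s)^2)$ where $Y_n^s$ is the maximum of $n$ independent geometric random variables on $\{1,2,\dots\}$ with parameter $p$). Then $y_1 = (2-p)/p^2$, and for every integer $n$ with $1 < n \le s$, $$y_n \;=\; \frac{\sum_{i=1}^{n-1}\binom{n}{i} p^i (1 - p)^{n - i}\, y_{n-i} \;-\; 1 \;+\; 2x_n}{1- (1 - p)^{n}}.$$ That is, the sequence $(y_n)$ is the solution of this recurrence with initial value $(2-p)/p^2$.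
   Context: A geometric random variable with parameter $p$ on $\{1,2,\dots\}$ has $\mathbb{P}(Z=m)=(1-p)^{m-1}p$ for $m\ge1$. *)

From mathcomp Require Import all_boot all_order all_algebra.
Set Implicit Arguments. Unset Strict Implicit. Unset Printing Implicit Defensive.
Import Order.TTheory GRing.Theory Num.Theory.
Local Open Scope ring_scope.

Definition xseq {R : realFieldType} (p : R) (n : nat) : R :=
  \sum_(1 <= k < n.+1) ('C(n, k))%:R * (-1) ^+ k.+1 / (1 - (1 - p) ^+ k).

Definition yseq {R : realFieldType} (p : R) (n : nat) : R :=
  \sum_(1 <= k < n.+1) ('C(n, k))%:R * (-1) ^+ k.+1
     * (1 + (1 - p) ^+ k) / (1 - (1 - p) ^+ k) ^+ 2.

From mathcomp Require Import all_boot all_order all_algebra.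
From mathcomp Require Import zify ring.
Set Implicit Arguments. Unset Strict Implicit. Unset Printing Implicit Defensive.
Import Order.TTheory GRing.Theory Num.Theory.
Local Open Scope ring_scope.

(* Write q = 1 - p and T_n g = sum_(k=1)^n C(n,k) (-1)^(k+1) g k.  By inclusion-exclusion
   over the minima of k of the geometric variables, x_n and y_n are T_n applied to the
   mean 1/(1 - q^k) and the second moment m2 k = (1 + q^k)/(1 - q^k)^2 of a geometric
   law with parameter 1 - q^k.  Binomial thinning,
     sum_(i=0)^n C(n,i) p^i q^(n-i) T_(n-i) g = T_n (fun k => q^k g k),
   turns the sum in the recurrence into T_n(q^k m2) - q^n y_n, so the recurrence reduces
   to T_n((1 - q^k) m2) = 2 x_n - 1.  This holds termwise, since
   (1 - a)(1 + a)/(1 - a)^2 = 2/(1 - a) - 1, together with T_n 1 = 1. *)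

Lemma muln_bin_sub_fact n i k : (i + k <= n)%N ->
  ('C(n, i) * 'C(n - i, k) * (i`! * k`! * (n - i - k)`!) = n`!)%N.
Proof.
move=> le_ikn; rewrite -(@bin_fact n i); last lia.
rewrite -(@bin_fact (n - i) k); [ring | lia].
Qed.

Lemma muln_bin_sub_small n i k : (n < i + k)%N -> ('C(n, i) * 'C(n - i, k) = 0)%N.
Proof.
move=> lt_n_ik; case: (leqP i n) => [le_in | lt_ni]; last by rewrite bin_small.
by rewrite (@bin_small (n - i) k) ?muln0 //; lia.
Qed.

Lemma muln_bin_sub n i k : ('C(n, i) * 'C(n - i, k) = 'C(n, k) * 'C(n - k, i))%N.
Proof.
case: (leqP (i + k) n) => [le_ikn | lt_nik]; last first.
  by rewrite !muln_bin_sub_small // addnC.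
have facts_gt0 : (0 < i`! * k`! * (n - i - k)`!)%N by rewrite !muln_gt0 !fact_gt0.
apply/eqP; rewrite -(eqn_pmul2r facts_gt0); apply/eqP.
rewrite muln_bin_sub_fact //.
rewrite (_ : i`! * k`! * (n - i - k)`! = k`! * i`! * (n - k - i)`!)%N.
  by rewrite muln_bin_sub_fact // addnC.
by rewrite (mulnC i`!) (_ : n - i - k = n - k - i)%N //; lia.
Qed.

Section AlternatingBinomialSums.
Variable R : comPzRingType.

Lemma sum_binomial_bin_sub (p : R) n k : (k <= n)%N ->
  \sum_(i < n.+1) ('C(n, i))%:R * p ^+ i * (1 - p) ^+ (n - i) * ('C(n - i, k))%:R
  = ('C(n, k))%:R * (1 - p) ^+ k.
Proof.
move=> le_kn.
transitivity (('C(n, k))%:R *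
    \sum_(i < (n - k).+1) ('C(n - k, i))%:R * p ^+ i * (1 - p) ^+ (n - i) : R).
  rewrite (big_ord_widen n.+1
    (fun i => ('C(n - k, i))%:R * p ^+ i * (1 - p) ^+ (n - i) : R)); last lia.
  rewrite mulr_sumr [RHS]big_mkcond; apply: eq_bigr => i _.
  have := congr1 (GRing.natmul (1 : R)) (muln_bin_sub n i k).
  rewrite !natrM => bin_swap.
  transitivity (('C(n, k))%:R * (('C(n - k, i))%:R * p ^+ i * (1 - p) ^+ (n - i)) : R).
    by rewrite !mulrA -bin_swap; ring.
  by case: ltnP => // lt_nk_i; rewrite (@bin_small (n - k) i) // !mul0r mulr0.
congr (_ * _).
have -> : (1 - p) ^+ k = (1 - p) ^+ k * ((1 - p) + p) ^+ (n - k).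
  by rewrite subrK expr1n mulr1.
rewrite [(1 - p + p) ^+ _]exprDn mulr_sumr; apply: eq_bigr => i _.
have -> : (n - i = k + (n - k - i))%N by have := ltn_ord i; lia.
by rewrite exprD -mulr_natl; ring.
Qed.

Definition alt_binomial_sum n (g : nat -> R) : R :=
  \sum_(1 <= k < n.+1) ('C(n, k))%:R * (-1) ^+ k.+1 * g k.

Lemma eq_alt_binomial_sum n (f g : nat -> R) :
  (forall k, (0 < k <= n)%N -> f k = g k) ->
  alt_binomial_sum n f = alt_binomial_sum n g.
Proof.
move=> eq_fg; rewrite /alt_binomial_sum big_nat_cond [RHS]big_nat_cond.
by apply: eq_bigr => k /andP[/andP[k_gt0 k_le_n] _]; rewrite eq_fg ?k_gt0.
Qed.

Lemma alt_binomial_sumB n (f g : nat -> R) :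
  alt_binomial_sum n (fun k => f k - g k) =
  alt_binomial_sum n f - alt_binomial_sum n g.
Proof. by rewrite /alt_binomial_sum -sumrB; apply: eq_bigr => k _; ring. Qed.

Lemma alt_binomial_sumZ n a (f : nat -> R) :
  alt_binomial_sum n (fun k => a * f k) = a * alt_binomial_sum n f.
Proof. by rewrite /alt_binomial_sum mulr_sumr; apply: eq_bigr => k _; ring. Qed.

Lemma alt_binomial_sum0 (g : nat -> R) : alt_binomial_sum 0 g = 0.
Proof. by rewrite /alt_binomial_sum big_geq. Qed.

Lemma alt_binomial_sum1 n : (0 < n)%N -> alt_binomial_sum n (fun=> 1) = 1.
Proof.
move=> n_gt0.
have alt_sum0 : \sum_(0 <= k < n.+1) ('C(n, k))%:R * (-1) ^+ k = 0 :> R.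
  rewrite big_mkord [RHS](_ : 0 = (1 - 1) ^+ n); last by rewrite subrr expr0n gtn_eqF.
  by rewrite exprBn; apply: eq_bigr => k _; rewrite !expr1n !mulr1 mulr_natl.
transitivity (- \sum_(1 <= k < n.+1) ('C(n, k))%:R * (-1) ^+ k : R).
  by rewrite -sumrN; apply: eq_bigr => k _; rewrite exprS; ring.
move: alt_sum0; rewrite big_ltn // bin0 expr0 mulr1 => /eqP.
by rewrite addrC addr_eq0 => /eqP ->; rewrite opprK.
Qed.

Lemma alt_binomial_sum_widen m n (g : nat -> R) : (m <= n)%N ->
  alt_binomial_sum m g = \sum_(1 <= k < n.+1) ('C(m, k))%:R * (-1) ^+ k.+1 * g k.
Proof.
move=> le_mn; rewrite /alt_binomial_sum (@big_cat_nat _ _ _ m.+1 1 n.+1) //=.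
rewrite [X in _ + X]big_nat_cond [X in _ + X]big1 ?addr0 // => k /andP[/andP[lt_mk _] _].
by rewrite bin_small // !mul0r.
Qed.

Lemma alt_binomial_sum_thin (p : R) n (g : nat -> R) :
  \sum_(0 <= i < n.+1)
    ('C(n, i))%:R * p ^+ i * (1 - p) ^+ (n - i) * alt_binomial_sum (n - i) g
  = alt_binomial_sum n (fun k => (1 - p) ^+ k * g k).
Proof.
under eq_bigr => i _ do
  rewrite (@alt_binomial_sum_widen (n - i) n) ?leq_subr // mulr_sumr.
rewrite exchange_big /alt_binomial_sum big_nat_cond [RHS]big_nat_cond.
apply: eq_bigr => k /andP[/andP[_ le_kn] _].
transitivity ((\sum_(i < n.+1) ('C(n, i))%:R * p ^+ i * (1 - p) ^+ (n - i)
    * ('C(n - i, k))%:R) * ((-1) ^+ k.+1 * g k)).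
  by rewrite big_mkord mulr_suml; apply: eq_bigr => i _; ring.
by rewrite sum_binomial_bin_sub //; ring.
Qed.

End AlternatingBinomialSums.

Section Moments.
Variables (R : realFieldType) (p : R).

Lemma xseqE n : xseq p n = alt_binomial_sum n (fun k => (1 - (1 - p) ^+ k)^-1).
Proof. by []. Qed.

Lemma yseqE n :
  yseq p n =
  alt_binomial_sum n (fun k => (1 + (1 - p) ^+ k) / (1 - (1 - p) ^+ k) ^+ 2).
Proof. by rewrite /yseq /alt_binomial_sum; apply: eq_bigr => k _; rewrite mulrA. Qed.

Lemma yseq1 : yseq p 1 = (2 - p) / p ^+ 2.
Proof.
rewrite /yseq big_nat1 binn !expr1 (_ : 1 - (1 - p) = p); last ring.
by rewrite sqrrN expr1n !mul1r addrA.
Qed.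

Lemma yseq_recurrence n : (0 < n)%N ->
    (forall k, (0 < k <= n)%N -> 1 - (1 - p) ^+ k != 0) ->
  (1 - (1 - p) ^+ n) * yseq p n =
  \sum_(1 <= i < n) ('C(n, i))%:R * p ^+ i * (1 - p) ^+ (n - i) * yseq p (n - i)
    - 1 + 2 * xseq p n.
Proof.
move=> n_gt0 geom_nz.
pose m2 k := (1 + (1 - p) ^+ k) / (1 - (1 - p) ^+ k) ^+ 2.
have thinned_sum :
    \sum_(1 <= i < n) ('C(n, i))%:R * p ^+ i * (1 - p) ^+ (n - i) * yseq p (n - i)
    = alt_binomial_sum n (fun k => (1 - p) ^+ k * m2 k) - (1 - p) ^+ n * yseq p n.
  rewrite -alt_binomial_sum_thin [in RHS]big_ltn // [in RHS]big_nat_recr //=.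
  rewrite subn0 subnn alt_binomial_sum0 bin0 binn expr0 !mulr1 mul1r mulr0 addr0.
  by rewrite yseqE -/m2 [RHS]addrC addKr; apply: eq_bigr => i _; rewrite yseqE.
have moments : yseq p n - alt_binomial_sum n (fun k => (1 - p) ^+ k * m2 k)
    = 2 * xseq p n - 1.
  rewrite yseqE xseqE -alt_binomial_sumZ -[X in _ = _ - X](alt_binomial_sum1 R n_gt0).
  rewrite -!alt_binomial_sumB.
  apply: eq_alt_binomial_sum => k /geom_nz; rewrite /m2; set a := (1 - p) ^+ k => a_nz.
  by field.
by rewrite thinned_sum -[2 * xseq p n](subrK 1) -moments; ring.
Qed.
End Moments.

Lemma one_sub_expr_onem_neq0 (R : realFieldType) (p : R) k :
  0 < p -> p <= 1 -> (0 < k)%N -> 1 - (1 - p) ^+ k != 0.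
Proof.
move=> p_gt0 p_le1 k_gt0; rewrite subr_eq0 eq_sym lt_eqF //.
by rewrite exprn_ilt1 ?subr_ge0 -?lt0n // gtrBl.
Qed.

Theorem theoremB4 (R : realFieldType) (p : R) (hp0 : 0 < p) (hp1 : p <= 1) :
  yseq p 1 = (2 - p) / p ^+ 2 /\
  (forall n : nat, (1 < n)%N -> n%:R <= p^-1 ->
     yseq p n =
       (\sum_(1 <= i < n) ('C(n, i))%:R * p ^+ i * (1 - p) ^+ (n - i)
            * yseq p (n - i) - 1 + 2 * xseq p n)
       / (1 - (1 - p) ^+ n)).
Proof.
have geom_nz k : (0 < k)%N -> 1 - (1 - p) ^+ k != 0 by exact: one_sub_expr_onem_neq0.
split; first exact: yseq1.
move=> n n_gt1 _; have n_gt0 := ltnW n_gt1.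
apply: (canRL (mulfK (geom_nz n n_gt0))).
by rewrite mulrC yseq_recurrence // => k /andP[k_gt0 _]; exact: geom_nz.
Qed.
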